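(* Fix $\lambda\ge 0$ and let $V(\cdot;\lambda):\mathcal{A}\times\mathcal{H}\to\mathbb{R}$ be such that, for every $h\in\mathcal{H}$, $V((A_l,A_r),h;\lambda)$ is non-decreasing in $A_l$ and in $A_r$ (e.g. a solution of the Bellman equation with this property). Define $J$ and $\Delta J_{\mathbf{w},\mathbf{w}'}$ from this $V$. Then for every $h\in\mathcal{H}$: (A) $\Delta J_{(0,0),(1,0)}(\mathbf{A},h;\lambda)$ is non-decreasing in $A_l$ (for fixed $A_r$), and $\Delta J_{(0,0),\mathbf{w}'}(\mathbf{A},h;\lambda)$ is non-decreasing in $A_r$ (for fixed $A_l$) for $\mathbf{w}'\in\{(0,1),(1,1)\}$; (B) for $\mathbf{w}\in\{(0,1),(1,1)\}$ and every $\mathbf{w}'\in\mathcal{W}$ with $\mathbf{w}'\ne\mathbf{w}$, $\Delta J_{\mathbf{w},\mathbf{w}'}(\mathbf{A},h;\lambda)$ is non-increasing in $A_r$ (for fixed $A_l$); (C) for every $\mathbf{w}'\in\mathcal{W}$ with $\mathbf{w}'\ne(1,0)$, $\Delta J_{(1,0),\mathbf{w}'}(\mathbf{A},h;\lambda)$ is non-increasing in $A_l$ (for fixed $A_r$).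
   Context: Single IoT device model. Fix integers $\hat A_l,\hat A_r\ge 1$ and let $\mathcal{A}_l=\{1,\dots,\hat A_l\}$, $\mathcal{A}_r=\{1,\dots,\hat A_r\}$, $\mathcal{A}=\mathcal{A}_l\times\mathcal{A}_r$, with elements $\mathbf{A}=(A_l,A_r)$. Let $\mathcal{H}\subset(0,\infty)$ be a finite set of channel states with probability mass function $p_{\mathcal{H}}$. The action set is $\mathcal{W}=\{0,1\}\times\{0,1\}$, with actions $\mathbf{w}=(s,u)$. Let $C_s\ge 0$ and $C_u:\mathcal{H}\to[0,\infty)$ decreasing; the energy cost is $C(\mathbf{w},h)=sC_s+uC_u(h)$. Under action $\mathbf{w}=(s,u)$ at AoI state $\mathbf{A}=(A_l,A_r)$, the next AoI state $\mathbf{A}'=(A_l',A_r')$ is $A_l'=1$ if $s=1$ and $A_l'=\min\{A_l+1,\hat A_l\}$ if $s=0$; $A_r'=\min\{A_l+1,\hat A_r\}$ if $u=1$ and $A_r'=\min\{A_r+1,\hat A_r\}$ if $u=0$. The Lagrange cost is $L(\mathbf{A},h,\mathbf{w};\lambda)=A_r+\lambda C(\mathbf{w},h)$. Given $V$, the state-action Lagrange cost is $J(\mathbf{A},h,\mathbf{w};\lambda)=L(\mathbf{A},h,\mathbf{w};\lambda)+\sum_{h'\in\mathcal{H}}p_{\mathcal{H}}(h')V(\mathbf{A}',h';\lambda)$ with $\mathbf{A}'$ the next AoI state under $\mathbf{w}$, and $\Delta J_{\mathbf{w},\mathbf{w}'}(\mathbf{A},h;\lambda)=J(\mathbf{A},h,\mathbf{w};\lambda)-J(\mathbf{A},h,\mathbf{w}';\lambda)$.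 *)

From HB Require Import structures.
From mathcomp Require Import all_boot all_order all_algebra.
Set Implicit Arguments. Unset Strict Implicit. Unset Printing Implicit Defensive.
Import Order.TTheory GRing.Theory Num.Theory.
Local Open Scope ring_scope.

(* AoI state A = (A_l, A_r) : nat * nat, valid when 1 <= A_l <= Ahl, 1 <= A_r <= Ahr.
   Action w = (s, u) : bool * bool  (true = 1, false = 0). *)

Definition next_state (Ahl Ahr : nat) (A : nat * nat) (w : bool * bool) : nat * nat :=
  let: (Al, Ar) := A in
  let: (s, u) := w in
  ((if s then 1 else minn Al.+1 Ahl)%N,
   (if u then minn Al.+1 Ahr else minn Ar.+1 Ahr)%N).

Definition energy_cost {R : realFieldType} (Cs : R) (Cu : R -> R)
    (w : bool * bool) (h : R) : R :=
  (if w.1 then Cs else 0) + (if w.2 then Cu h else 0).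

Definition lagr_cost {R : realFieldType} (Cs : R) (Cu : R -> R) (lam : R)
    (A : nat * nat) (h : R) (w : bool * bool) : R :=
  (A.2)%:R + lam * energy_cost Cs Cu w h.

Definition Jfun {R : realFieldType} (Ahl Ahr : nat) (H : seq R) (p : R -> R)
    (Cs : R) (Cu : R -> R) (lam : R) (V : nat * nat -> R -> R)
    (A : nat * nat) (h : R) (w : bool * bool) : R :=
  lagr_cost Cs Cu lam A h w
  + \sum_(h' <- H) p h' * V (next_state Ahl Ahr A w) h'.

Definition DeltaJ {R : realFieldType} (Ahl Ahr : nat) (H : seq R) (p : R -> R)
    (Cs : R) (Cu : R -> R) (lam : R) (V : nat * nat -> R -> R)
    (w w' : bool * bool) (A : nat * nat) (h : R) : R :=
  Jfun Ahl Ahr H p Cs Cu lam V A h w - Jfun Ahl Ahr H p Cs Cu lam V A h w'.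

Definition nondecr_in_Al {R : realFieldType} (Ahl Ahr : nat) (f : nat * nat -> R) :=
  forall Al Al' Ar : nat, (1 <= Al)%N -> (Al <= Al')%N -> (Al' <= Ahl)%N ->
    (1 <= Ar)%N -> (Ar <= Ahr)%N -> f (Al, Ar) <= f (Al', Ar).

Definition nondecr_in_Ar {R : realFieldType} (Ahl Ahr : nat) (f : nat * nat -> R) :=
  forall Al Ar Ar' : nat, (1 <= Al)%N -> (Al <= Ahl)%N ->
    (1 <= Ar)%N -> (Ar <= Ar')%N -> (Ar' <= Ahr)%N -> f (Al, Ar) <= f (Al, Ar').

Definition nonincr_in_Al {R : realFieldType} (Ahl Ahr : nat) (f : nat * nat -> R) :=
  forall Al Al' Ar : nat, (1 <= Al)%N -> (Al <= Al')%N -> (Al' <= Ahl)%N ->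
    (1 <= Ar)%N -> (Ar <= Ahr)%N -> f (Al', Ar) <= f (Al, Ar).

Definition nonincr_in_Ar {R : realFieldType} (Ahl Ahr : nat) (f : nat * nat -> R) :=
  forall Al Ar Ar' : nat, (1 <= Al)%N -> (Al <= Ahl)%N ->
    (1 <= Ar)%N -> (Ar <= Ar')%N -> (Ar' <= Ahr)%N -> f (Al, Ar') <= f (Al, Ar).

From HB Require Import structures.
From mathcomp Require Import all_boot all_order all_algebra.
From mathcomp Require Import zify ring.
Import Order.TTheory GRing.Theory Num.Theory.
Local Open Scope ring_scope.

(* For fixed h, the state-action cost splits as
     J(A,h,w) = A_r + lam * C(w,h) + EV(A'(A,w)),
   where EV(B) = sum_h' p(h') V(B,h') is the expected value of the next
   state B.  In a difference Delta J_{w,w'} the term A_r cancels and the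
   energy term does not depend on A, so only EV(A'(A,w)) - EV(A'(A,w'))
   varies with A.  Since p >= 0 and V is non-decreasing in each coordinate,
   EV is non-decreasing for the componentwise order on valid states.  Hence
   Delta J_{w,w'} increases from A to a larger state whenever the next state
   under w moves up and the next state under w' moves down (or stays put);
   each of the claims (A)-(C) is then an inspection of how the explicit
   next-state map reacts to increasing A_l or A_r under the relevant
   actions, which is plain natural-number arithmetic. *)

Section ExpectedNextValue.
Variables (R : realFieldType) (Ahl Ahr : nat) (H : seq R) (p : R -> R).
Variables (Cs : R) (Cu : R -> R) (lam : R) (V : nat * nat -> R -> R).

Definition expected_value (B : nat * nat) : R := \sum_(h' <- H) p h' * V B h'.

Lemma DeltaJ_split w w' A h :
  DeltaJ Ahl Ahr H p Cs Cu lam V w w' A h =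
  lam * (energy_cost Cs Cu w h - energy_cost Cs Cu w' h)
  + (expected_value (next_state Ahl Ahr A w)
     - expected_value (next_state Ahl Ahr A w')).
Proof. by rewrite /DeltaJ /Jfun /lagr_cost /expected_value; ring. Qed.

Lemma DeltaJ_le w w' A B h :
  expected_value (next_state Ahl Ahr A w)
    <= expected_value (next_state Ahl Ahr B w) ->
  expected_value (next_state Ahl Ahr B w')
    <= expected_value (next_state Ahl Ahr A w') ->
  DeltaJ Ahl Ahr H p Cs Cu lam V w w' A h
    <= DeltaJ Ahl Ahr H p Cs Cu lam V w w' B h.
Proof. by move=> le_w le_w'; rewrite !DeltaJ_split lerD2l lerB. Qed.

Hypothesis p_ge0 : forall h, h \in H -> 0 <= p h.
Hypothesis V_Al : forall h, h \in H -> nondecr_in_Al Ahl Ahr (fun A => V A h).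
Hypothesis V_Ar : forall h, h \in H -> nondecr_in_Ar Ahl Ahr (fun A => V A h).

Lemma expected_value_mono a a' b b' :
  (1 <= a)%N -> (a <= a')%N -> (a' <= Ahl)%N ->
  (1 <= b)%N -> (b <= b')%N -> (b' <= Ahr)%N ->
  expected_value (a, b) <= expected_value (a', b').
Proof.
move=> a_ge1 le_aa' a'_le b_ge1 le_bb' b'_le.
rewrite /expected_value !big_seq; apply: ler_sum => h' h'H.
apply: ler_wpM2l; first exact: p_ge0.
have le_b_Ahr : (b <= Ahr)%N by lia.
have le_a'b : V (a, b) h' <= V (a', b) h' by exact: V_Al.
have le_a'b' : V (a', b) h' <= V (a', b') h' by apply: V_Ar => //; lia.
exact: le_trans le_a'b le_a'b'.
Qed.

End ExpectedNextValue.

Theorem lemma4 (R : realFieldType) (Ahl Ahr : nat) (H : seq R) (p : R -> R)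
    (Cs : R) (Cu : R -> R) (lam : R) (V : nat * nat -> R -> R) :
  (1 <= Ahl)%N -> (1 <= Ahr)%N ->
  (* finite set of channel states in (0, oo) with pmf p *)
  uniq H -> (forall h, h \in H -> 0 < h) ->
  (forall h, h \in H -> 0 <= p h) -> \sum_(h <- H) p h = 1 ->
  (* energy costs *)
  0 <= Cs -> (forall h, h \in H -> 0 <= Cu h) ->
  (forall h1 h2, h1 \in H -> h2 \in H -> h1 <= h2 -> Cu h2 <= Cu h1) ->
  0 <= lam ->
  (* V non-decreasing in A_l and in A_r, for every h *)
  (forall h, h \in H -> nondecr_in_Al Ahl Ahr (fun A => V A h)) ->
  (forall h, h \in H -> nondecr_in_Ar Ahl Ahr (fun A => V A h)) ->
  forall h, h \in H ->
  let DJ := fun w w' A => DeltaJ Ahl Ahr H p Cs Cu lam V w w' A h in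
  (* (A) *)
  [/\ nondecr_in_Al Ahl Ahr (DJ (false, false) (true, false)),
      (forall w', w' \in [:: (false, true); (true, true)] ->
         nondecr_in_Ar Ahl Ahr (DJ (false, false) w')),
  (* (B) *)
      (forall w w', w \in [:: (false, true); (true, true)] -> w' != w ->
         nonincr_in_Ar Ahl Ahr (DJ w w'))
  (* (C) *)
    & (forall w', w' != (true, false) ->
         nonincr_in_Al Ahl Ahr (DJ (true, false) w'))].
Proof.
move=> _ _ _ _ p_ge0 _ _ _ _ _ V_Al V_Ar h _ DJ.
have EV_mono := @expected_value_mono _ _ _ _ _ _ p_ge0 V_Al V_Ar.
split.
- move=> Al Al' Ar *.
  by apply: DeltaJ_le => /=; apply: EV_mono; lia.
- move=> [[] []]; rewrite !inE // => _ Al Ar Ar' *;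
  by apply: DeltaJ_le => /=; apply: EV_mono; lia.
- move=> [[] []] [[] []]; rewrite !inE // => _ _ Al Ar Ar' *;
  by apply: DeltaJ_le => /=; apply: EV_mono; lia.
- move=> [[] []] // _ Al Al' Ar *;
  by apply: DeltaJ_le => /=; apply: EV_mono; lia.
Qed.
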